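(* Let $s\geq 3$ and $v=3s$. Then there exist a cubic bipartite graph $\Gamma$ on $2s$ vertices, a symmetric configuration $\mathcal{X}$ on $v$ points with strong chromatic number 3, and a strong 3-colouring of $\mathcal{X}$ such that, for each of the three colour classes, the subgraph of the associated graph of $\mathcal{X}$ induced by the points of the other two colour classes is isomorphic to $\Gamma$.
   Context: A symmetric configuration $v_3$ consists of a set of $v$ points and a collection of $v$ blocks, each block being a 3-element subset of the points, such that every point lies in exactly 3 blocks and any two distinct points lie in at most one common block. The associated graph has the points as vertices, two points adjacent iff they lie in a common block. A strong colouring is an assignment of colours to points such that the three points of every block receive three distinct colours; the strong chromatic number is the minimum number of colours in a strong colouring. *)

From mathcomp Require Import all_boot.
Set Implicit Arguments. Unset Strict Implicit. Unset Printing Implicit Defensive.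

Definition simple_graph (T : finType) (G : rel T) : Prop :=
  irreflexive G /\ symmetric G.

Definition cubic (T : finType) (G : rel T) : Prop :=
  forall x : T, #|[set y | G x y]| = 3.

Definition bipartite (T : finType) (G : rel T) : Prop :=
  exists f : T -> bool, forall x y, G x y -> f x != f y.

Definition cubic_bipartite_graph (T : finType) (G : rel T) : Prop :=
  [/\ simple_graph G, cubic G & bipartite G].

Definition iso_induced (T U : finType) (G : rel T) (H : rel U) (S : {set U}) :
  Prop :=
  exists f : T -> U,
    [/\ injective f, forall u, u \in S <-> exists x, f x = u &
        forall x y, G x y = H (f x) (f y)].

Definition symmetric_configuration (P : finType) (B : {set {set P}}) : Prop :=
  [/\ #|B| = #|P|,
      forall b, b \in B -> #|b| = 3,
      forall x : P, #|[set b in B | x \in b]| = 3 &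
      forall x y : P, x != y -> #|[set b in B | (x \in b) && (y \in b)]| <= 1].

Definition config_graph (P : finType) (B : {set {set P}}) : rel P :=
  fun x y => (x != y) && [exists b in B, (x \in b) && (y \in b)].

Definition strong_colouring (P : finType) (B : {set {set P}}) (k : nat)
  (c : P -> 'I_k) : Prop :=
  forall b, b \in B -> forall x y, x \in b -> y \in b -> x != y -> c x != c y.

Definition strong_colourable (P : finType) (B : {set {set P}}) (k : nat) : Prop :=
  exists c : P -> 'I_k, strong_colouring B c.

Definition strong_chromatic_number (P : finType) (B : {set {set P}}) (k : nat)
  : Prop :=
  strong_colourable B k /\ forall j, j < k -> ~ strong_colourable B j.

From mathcomp Require Import all_boot all_algebra zify.
Set Implicit Arguments. Unset Strict Implicit. Unset Printing Implicit Defensive.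
Import GRing.Theory.

(* Let V be a finite abelian group with an element g of order
   at least 3 (for the theorem, V = Z_s and g = 1).  The points are the pairs
   (a, m) with a in Z_3 (the "class") and m in V; for every direction k in Z_3
   and j in V the block B(k, j) = { (a, j + (a k) g) : a in Z_3 } has one point
   in each class, where a k is computed in Z_3 and read in {0, 1, 2}.  For two
   distinct classes a, b, the gaps (b k) g - (a k) g over the three directions
   form a translate of { 0, g, 2g } (lemma height_gap_row); this yields at the
   same time that two points share at most one block, and that the points of
   any two classes induce, up to translation, the bipartite graph joining
   (false, m) to (true, m + k g), k = 0, 1, 2.  Colouring a point by its class
   is a strong 3-colouring. *)

Section ConfigurationFacts.
Variables (P : finType) (B : {set {set P}}).

(* A strong colouring is injective on every block, so it needs at least as
   many colours as a block has points. *)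
Lemma block_card_le_colours (k : nat) (c : P -> 'I_k) (b : {set P}) :
  strong_colouring B c -> b \in B -> #|b| <= k.
Proof.
move=> c_strong bB; rewrite -[k]card_ord -(card_in_imset (f := c)).
  exact: max_card.
move=> x y xb yb cxy; apply/eqP; apply: contraT => x_neq_y.
by have := c_strong b bB x y xb yb x_neq_y; rewrite cxy eqxx.
Qed.

Lemma strong_chromatic_number_three :
  symmetric_configuration B -> 0 < #|P| -> strong_colourable B 3 ->
  strong_chromatic_number B 3.
Proof.
case=> card_B card_b _ _ P_gt0 col3; split=> // j j_lt3 [c c_strong].
have [b bB] : exists b, b \in B by apply/set0Pn; rewrite -card_gt0 card_B.
by have := block_card_le_colours c_strong bB; rewrite card_b // leqNgt j_lt3.
Qed.

(* The blocks through a point x are the blocks through the pair (x, x), so that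
   point degrees and pair degrees can be handled by one lemma. *)
Lemma blocks_through_point (x : P) :
  [set b in B | x \in b] = [set b in B | (x \in b) && (x \in b)].
Proof. by apply/setP=> b; rewrite !inE andbb. Qed.

Lemma config_graph_sym : symmetric (config_graph B).
Proof.
move=> x y; rewrite /config_graph eq_sym; congr (_ && _).
by apply/existsP/existsP=> -[b /and3P [bB xb yb]]; exists b; rewrite bB xb yb.
Qed.

End ConfigurationFacts.

Section Relabelling.
Variables (T T' : finType) (f : T -> T') (g : T' -> T).
Hypotheses (fK : cancel f g) (gK : cancel g f).

Definition relabel_rel (G : rel T) : rel T' := fun x y => G (g x) (g y).
Definition relabel_block (b : {set T}) : {set T'} := f @: b.
Definition relabel_blocks (B : {set {set T}}) : {set {set T'}} :=
  relabel_block @: B.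

Lemma mem_relabel (b : {set T}) (x : T') : (x \in relabel_block b) = (g x \in b).
Proof.
apply/imsetP/idP => [[y yb ->]|gxb]; first by rewrite fK.
by exists (g x); rewrite ?gK.
Qed.

Lemma relabel_cubic_bipartite (G : rel T) :
  cubic_bipartite_graph G -> cubic_bipartite_graph (relabel_rel G).
Proof.
case=> -[G_irr G_sym] G_cubic [side G_side]; split.
- by split=> [x | x y]; [apply: G_irr | apply: G_sym].
- move=> x; rewrite -(G_cubic (g x)) -(card_imset _ (can_inj fK)).
  by apply: eq_card => y; rewrite mem_relabel !inE.
- by exists (side \o g) => x y; apply: G_side.
Qed.

Lemma relabel_blocks_through (B : {set {set T}}) (x y : T') :
  [set b in relabel_blocks B | (x \in b) && (y \in b)] =
  relabel_block @: [set b in B | (g x \in b) && (g y \in b)].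
Proof.
apply/setP=> b'; rewrite inE; apply/andP/imsetP => [[/imsetP [b bB ->]]|].
  by rewrite !mem_relabel => xy_b; exists b; rewrite // inE bB.
case=> b; rewrite inE => /andP [bB xy_b] ->.
by rewrite !mem_relabel; split=> //; apply: imset_f.
Qed.

Lemma relabel_symmetric_configuration (B : {set {set T}}) :
  symmetric_configuration B -> symmetric_configuration (relabel_blocks B).
Proof.
have relabel_block_inj : injective relabel_block.
  exact: imset_inj (can_inj fK).
have card_through x y : #|[set b in relabel_blocks B | (x \in b) && (y \in b)]|
    = #|[set b in B | (g x \in b) && (g y \in b)]|.
  by rewrite relabel_blocks_through card_imset.
case=> card_B card_b deg pair; split.
- rewrite card_imset // card_B; exact: bij_eq_card (Bijective fK gK).
- by move=> _ /imsetP [b bB ->]; rewrite card_imset ?card_b //; apply: can_inj fK.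
- by move=> x; rewrite -(deg (g x)) !blocks_through_point card_through.
- move=> x y x_neq_y; rewrite card_through; apply: pair.
  by rewrite (inj_eq (can_inj gK)).
Qed.

Lemma relabel_config_graph (B : {set {set T}}) (x y : T') :
  config_graph (relabel_blocks B) x y = config_graph B (g x) (g y).
Proof.
rewrite /config_graph (inj_eq (can_inj gK)); congr (_ && _).
apply/existsP/existsP => [[_ /andP [/imsetP [b bB ->]]]|[b /andP [bB xy_b]]].
  by rewrite !mem_relabel => xy_b; exists b; rewrite bB.
by exists (relabel_block b); rewrite imset_f // !mem_relabel.
Qed.

Lemma relabel_strong_colouring (B : {set {set T}}) (k : nat) (c : T -> 'I_k) :
  strong_colouring B c -> strong_colouring (relabel_blocks B) (c \o g).
Proof.
move=> c_strong _ /imsetP [b bB ->] x y; rewrite !mem_relabel => xb yb x_neq_y.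
by apply: (c_strong b) => //; rewrite (inj_eq (can_inj gK)).
Qed.

End Relabelling.

Section RelabelInducedSubgraph.
Variables (T1 T1' T2 T2' : finType).
Variables (f1 : T1 -> T1') (g1 : T1' -> T1) (f2 : T2 -> T2') (g2 : T2' -> T2).
Hypotheses (f1K : cancel f1 g1) (g1K : cancel g1 f1).
Hypotheses (f2K : cancel f2 g2) (g2K : cancel g2 f2).

(* An isomorphism onto an induced subgraph survives relabelling of both the
   graph and the host; the host is given up to pointwise equality. *)
Lemma relabel_iso_induced (G : rel T1) (H : rel T2) (S : {set T2})
    (H' : rel T2') (S' : {set T2'}) :
  (forall x y, H' x y = H (g2 x) (g2 y)) -> (forall u, (u \in S') = (g2 u \in S)) ->
  iso_induced G H S -> iso_induced (relabel_rel g1 G) H' S'.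
Proof.
move=> H'E S'E [phi [phi_inj phi_onto phi_edge]].
exists (f2 \o phi \o g1); split.
- by apply: inj_comp (can_inj f2K) (inj_comp phi_inj (can_inj g1K)).
- move=> u; rewrite S'E phi_onto; split=> [[x phi_x]|[x <-]].
    by exists (f1 x); rewrite /= f1K phi_x g2K.
  by exists (g1 x); rewrite f2K.
- by move=> x y; rewrite H'E /= !f2K /relabel_rel phi_edge.
Qed.

End RelabelInducedSubgraph.

Section OrdinalRelabelling.
Variables (T : finType) (m : nat).
Hypothesis card_T : #|T| = m.

Definition to_ord (x : T) : 'I_m := cast_ord card_T (enum_rank x).
Definition of_ord (i : 'I_m) : T := enum_val (cast_ord (esym card_T) i).

Lemma to_ordK : cancel to_ord of_ord.
Proof. by move=> x; rewrite /to_ord /of_ord cast_ordK enum_rankK. Qed.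

Lemma of_ordK : cancel of_ord to_ord.
Proof. by move=> i; rewrite /to_ord /of_ord enum_valK cast_ordKV. Qed.

End OrdinalRelabelling.

Section DifferenceTable.
Local Open Scope ring_scope.

(* Colour classes and block directions are both indexed by Z_3 = 'I_3.  On
   the block of direction k, the point of class a sits at height a * k,
   computed in Z_3 and read as an integer in {0, 1, 2}.  height_gap a b k is
   the difference of heights between classes b and a. *)
Definition height_gap (a b k : 'I_3) : int := (b * k)%R%:Z - (a * k)%R%:Z.

Lemma height_gap_row (a b : 'I_3) : a != b ->
  exists (t : int) (pi : 'I_3 -> 'I_3),
    injective pi /\ forall k, height_gap a b k = t + (pi k)%:Z.
Proof.
wlog lt_ab : a b / (a < b)%N => [wlog_lt a_neq_b|_].
  case: (ltngtP a b) => [lt_ab|lt_ba|eq_ab]; first exact: wlog_lt.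
    (* Swapping a and b negates the gaps: reverse the permutation. *)
    have [t [pi [pi_inj gapE]]] := wlog_lt b a lt_ba (negbT (ltn_eqF lt_ba)).
    exists (- t - 2), (fun k => rev_ord (pi k)).
    split=> [|k]; first exact: inj_comp rev_ord_inj pi_inj.
    by have := gapE k; have := ltn_ord (pi k); rewrite /height_gap /=; lia.
  by move: a_neq_b; rewrite (val_inj eq_ab) eqxx.
case: a b lt_ab => [[|[|[|//]]] ?] [[|[|[|//]]] ?] //= _.
- by exists 0, id; split=> // -[[|[|[|//]]] ?].
- by exists 0, (fun k => - k); split=> [|[[|[|[|//]]] ?]] //; apply: oppr_inj.
- by exists (-1), (fun k => k + 1); split=> [|[[|[|[|//]]] ?]] //; apply: addIr.
Qed.

Lemma other_classes (i : 'I_3) :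
  exists a b : 'I_3, a != b /\ forall x, (x != i) = (x == a) || (x == b).
Proof.
by case: i => -[|[|[|//]]] ?; [exists 1, (-1) | exists 0, (-1) | exists 0, 1];
  split=> // -[[|[|[|//]]] ?].
Qed.

End DifferenceTable.

Section CyclicConfiguration.
Local Open Scope ring_scope.
Variables (V : finZmodType) (g : V).
Hypotheses (g_neq0 : g != 0) (g2_neq0 : g *+ 2 != 0).

Definition step (k : 'I_3) : V := g *+ k.

Lemma step_inj : injective step.
Proof.
have small_mul_neq0 n : (0 < n < 3)%N -> g *+ n != 0 by case: n => [|[|[|]]].
move=> m n; wlog le_mn : m n / (m <= n)%N => [wlog_le|].
  by case/orP: (leq_total m n) => [? | ? /esym]; [exact: wlog_le | move/wlog_le->].
rewrite /step => step_eq; apply/val_inj/eqP; rewrite eqn_leq le_mn /=.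
apply: contraT; rewrite -ltnNge => lt_mn.
have gap_bounds : (0 < n - m < 3)%N by have := ltn_ord n; lia.
have /eqP[] := small_mul_neq0 _ gap_bounds.
by rewrite mulrnBr // step_eq subrr.
Qed.

Definition height (a k : 'I_3) : V := step (a * k).

Lemma height_row (a b : 'I_3) : a != b ->
  exists (t : V) (pi : 'I_3 -> 'I_3),
    injective pi /\ forall k, height b k - height a k = t + step (pi k).
Proof.
case/height_gap_row=> t [pi [pi_inj gapE]]; exists (g *~ t), pi; split=> // k.
by rewrite /height /step !pmulrn -mulrzBr -mulrzDr -gapE.
Qed.

Lemma height_row_inj (a b : 'I_3) : a != b ->
  injective (fun k => height b k - height a k).
Proof.
case/height_row=> t [pi [pi_inj rowE]] k1 k2; rewrite !rowE.
by move/addrI/step_inj/pi_inj.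
Qed.

(* Points are pairs (class, position); the block indexed by (k, j) consists of
   the points (a, j + height a k), one in each class. *)
Definition incident (p q : 'I_3 * V) : bool := p.2 == q.2 + height p.1 q.1.
Definition block (q : 'I_3 * V) : {set 'I_3 * V} := [set p | incident p q].
Definition cyclic_blocks : {set {set 'I_3 * V}} := [set block q | q : 'I_3 * V].

Lemma incident_same_class (p1 p2 q : 'I_3 * V) :
  incident p1 q -> incident p2 q -> p1.1 = p2.1 -> p1 = p2.
Proof.
by case: p1 p2 => [a1 m1] [a2 m2] /eqP /= -> /eqP /= -> ->.
Qed.

Lemma incident_unique_block (p1 p2 q1 q2 : 'I_3 * V) : p1 != p2 ->
  incident p1 q1 -> incident p2 q1 -> incident p1 q2 -> incident p2 q2 -> q1 = q2.
Proof.
move=> p1_neq_p2 inc11 inc21 inc12 inc22.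
have classes_neq : p1.1 != p2.1.
  by apply: contra p1_neq_p2 => /eqP /(incident_same_class inc11 inc21) ->.
have gapE (q : 'I_3 * V) : incident p1 q -> incident p2 q ->
    p2.2 - p1.2 = height p2.1 q.1 - height p1.1 q.1.
  by move=> /eqP -> /eqP ->; rewrite opprD addrACA subrr add0r.
have eq_dir : q1.1 = q2.1.
  by apply: (height_row_inj classes_neq); rewrite /= -gapE // -gapE.
case: q1 q2 eq_dir inc11 inc12 {inc21 inc22} => [k j1] [_ j2] /= <-.
by rewrite /incident /= => /eqP -> /eqP /addIr ->.
Qed.

Definition block_point (q : 'I_3 * V) (a : 'I_3) : 'I_3 * V := (a, q.2 + height a q.1).

Lemma incident_block_point (q : 'I_3 * V) (a : 'I_3) : incident (block_point q a) q.
Proof. exact: eqxx. Qed.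

Lemma block_points (q : 'I_3 * V) : block q = [set block_point q a | a : 'I_3].
Proof.
apply/setP=> -[a m]; rewrite inE /incident /=.
by apply/eqP/imsetP => [->|[a' _ [-> ->]]] //; exists a.
Qed.

Lemma card_block (q : 'I_3 * V) : #|block q| = 3.
Proof.
by rewrite block_points card_imset ?card_ord // => a1 a2 [].
Qed.

(* Distinct indices give distinct blocks: two points of a block determine it. *)
Lemma block_inj : injective block.
Proof.
move=> q1 q2 eq_block; have on_q2 a : block_point q1 a \in block q2.
  by rewrite -eq_block inE incident_block_point.
have := on_q2 0; have := on_q2 1; rewrite !inE => inc1_q2 inc0_q2.
by apply: (incident_unique_block _ (incident_block_point q1 0)
  (incident_block_point q1 1) inc0_q2 inc1_q2).
Qed.

Lemma blocks_through (p : 'I_3 * V) :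
  [set q | incident p q] = [set (k, p.2 - height p.1 k) | k : 'I_3].
Proof.
apply/setP=> -[k j]; rewrite inE /incident /=.
apply/eqP/imsetP => [->|[k' _ [-> ->]]]; last by rewrite subrK.
by exists k; rewrite ?addrK.
Qed.

Lemma cyclic_symmetric_configuration : symmetric_configuration cyclic_blocks.
Proof.
have blocks_via (p1 p2 : 'I_3 * V) :
    [set b in cyclic_blocks | (p1 \in b) && (p2 \in b)] =
    block @: [set q | incident p1 q && incident p2 q].
  apply/setP=> b; rewrite inE; apply/andP/imsetP => [[/imsetP [q _ ->]]|[q]].
    by rewrite !inE => p12_q; exists q; rewrite ?inE.
  by rewrite !inE => p12_q ->; split; [apply: imset_f | rewrite !inE].
split.
- by rewrite card_imset //; exact: block_inj.
- by move=> _ /imsetP [q _ ->]; apply: card_block.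
- move=> p; rewrite blocks_through_point blocks_via card_imset; last exact: block_inj.
  have -> : [set q | incident p q && incident p q] = [set q | incident p q].
    by apply/setP=> q; rewrite !inE andbb.
  by rewrite blocks_through card_imset ?card_ord // => k1 k2 [].
- move=> p1 p2 p1_neq_p2; rewrite blocks_via; apply: leq_trans (leq_imset_card _ _) _.
  apply/card_le1_eqP => q1 q2; rewrite !inE => /andP [inc11 inc21] /andP [inc12 inc22].
  exact: incident_unique_block p1_neq_p2 inc12 inc22 inc11 inc21.
Qed.

Definition class (p : 'I_3 * V) : 'I_3 := p.1.

Lemma class_strong_colouring : strong_colouring cyclic_blocks class.
Proof.
move=> _ /imsetP [q _ ->] p1 p2; rewrite !inE => inc1 inc2.
by apply: contra => /eqP same_class; rewrite (incident_same_class inc1 inc2 same_class).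
Qed.

Lemma cyclic_adjacent_same_class (p1 p2 : 'I_3 * V) :
  p1.1 = p2.1 -> config_graph cyclic_blocks p1 p2 = false.
Proof.
move=> same_class; apply/negP => /andP [p1_neq_p2 /existsP [b]].
case/andP=> /imsetP [q _ ->]; rewrite !inE => /andP [inc1 inc2].
by rewrite (incident_same_class inc1 inc2 same_class) eqxx in p1_neq_p2.
Qed.

Lemma cyclic_adjacent_cross (p1 p2 : 'I_3 * V) : p1.1 != p2.1 ->
  config_graph cyclic_blocks p1 p2 =
  [exists k, p2.2 - p1.2 == height p2.1 k - height p1.1 k].
Proof.
move=> classes_neq; rewrite /config_graph.
have -> : p1 != p2 by apply: contra classes_neq => /eqP ->.
apply/existsP/existsP => [[_ /andP [/imsetP [[k j] _ ->]]]|[k /eqP gapE]].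
  by rewrite !inE /incident /= => /andP [/eqP -> /eqP ->]; exists k;
    rewrite opprD addrACA subrr add0r.
exists (block (k, p1.2 - height p1.1 k)); rewrite imset_f ?inE //=.
rewrite /incident /= subrK eqxx /=; apply/eqP.
by rewrite -addrA [- _ + _]addrC -gapE addrC subrK.
Qed.

Definition step_adjacent (m m' : V) : bool := [exists k, m' - m == step k].

Definition step_graph : rel (bool * V) := fun p q =>
  match p.1, q.1 with
  | false, true => step_adjacent p.2 q.2
  | true, false => step_adjacent q.2 p.2
  | _, _ => false
  end.

Lemma step_graph_neighbours (p : bool * V) :
  [set q | step_graph p q] =
  [set (~~ p.1, if p.1 then p.2 - step k else p.2 + step k) | k : 'I_3].
Proof.
case: p => side m; apply/setP=> -[side' m']; rewrite inE /step_graph /=.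
case: side; case: side' => /=; try by apply/esym/imsetP => -[k _ []].
- apply/existsP/imsetP => [[k /eqP gapE]|[k _ [->]]].
    by exists k; rewrite // -gapE opprB addrC subrK.
  by exists k; rewrite opprB addrC subrK.
- apply/existsP/imsetP => [[k /eqP gapE]|[k _ [->]]].
    by exists k; rewrite // -gapE addrC subrK.
  by exists k; rewrite addrAC subrr add0r.
Qed.

Lemma step_graph_cubic_bipartite : cubic_bipartite_graph step_graph.
Proof.
split.
- by split=> [[[] m] | [[] m] [[] m']].
- move=> p; rewrite step_graph_neighbours card_imset ?card_ord // => k1 k2 [].
  by case: p.1 => /addrI; [move/oppr_inj/step_inj | move/step_inj].
- by exists fst => -[[] m] [[] m'].
Qed.

(* For every colour class i, the subgraph induced on the two other classes a
   and b is the step graph: the two sides go to classes a and b, the latter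
   shifted by the translation t of the gap row from a to b. *)
Lemma induced_two_classes (i : 'I_3) :
  iso_induced step_graph (config_graph cyclic_blocks) [set p | class p != i].
Proof.
have [a [b [a_neq_b otherE]]] := other_classes i.
have [t [pi [pi_inj rowE]]] := height_row a_neq_b.
have [pi' _ pi'K] := injF_bij pi_inj.
have cross_edge (m m' : V) :
    config_graph cyclic_blocks (a, m) (b, m' + t) = step_adjacent m m'.
  rewrite cyclic_adjacent_cross //=; apply/existsP/existsP => -[k].
    by rewrite rowE addrAC addrC (inj_eq (addrI t)) => ?; exists (pi k).
  by exists (pi' k); rewrite rowE pi'K addrAC addrC (inj_eq (addrI t)).
pose phi (p : bool * V) := if p.1 then (b, p.2 + t) else (a, p.2).
exists phi; split.
- move=> [[] m1] [[] m2]; rewrite /phi /= => -[] //.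
  + by move/addIr->.
  + by move=> eq_ab; rewrite eq_ab eqxx in a_neq_b.
  + by move=> eq_ab; rewrite eq_ab eqxx in a_neq_b.
  + by move->.
- move=> [x m]; rewrite inE /class /= otherE; split.
    case/orP=> /eqP ->; first by exists (false, m).
    by exists (true, m - t); rewrite /phi /= subrK.
  by case=> -[[] m'] [<- _]; rewrite eqxx ?orbT.
- move=> [[] m1] [[] m2]; rewrite /phi /step_graph /=.
  + by rewrite cyclic_adjacent_same_class.
  + by rewrite config_graph_sym -cross_edge.
  + by rewrite -cross_edge.
  + by rewrite cyclic_adjacent_same_class.
Qed.
End CyclicConfiguration.

Section ZpOrder.
Local Open Scope ring_scope.

Lemma Zp_one_order_ge3 (n : nat) : (2 < n)%N -> (1 : 'Z_n) != 0 /\ (1 : 'Z_n) *+ 2 != 0.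
Proof.
move=> n_gt2; have n_gt1 : (1 < n)%N by lia.
have small_nat_neq0 k : (0 < k < n)%N -> (k%:R : 'Z_n) != 0.
  move=> k_bounds; apply/eqP => /(congr1 val).
  by rewrite /= val_Zp_nat // modn_small; lia.
by split; [rewrite -(mulr1n 1) |]; apply: small_nat_neq0; lia.
Qed.

End ZpOrder.

Theorem mainTheorem13 (s : nat) : 3 <= s ->
  exists (G : rel 'I_(2 * s)) (B : {set {set 'I_(3 * s)}}) (c : 'I_(3 * s) -> 'I_3),
    [/\ cubic_bipartite_graph G,
        symmetric_configuration B,
        strong_chromatic_number B 3,
        strong_colouring B c &
        forall i : 'I_3, iso_induced G (config_graph B) [set x | c x != i]].
Proof.
move=> s_ge3; have [one_neq0 two_neq0] := Zp_one_order_ge3 s_ge3.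
have card_Zs : #|'Z_s| = s by rewrite card_ord Zp_cast //; lia.
have card_points : #|{: 'I_3 * 'Z_s}| = 3 * s by rewrite card_prod card_ord card_Zs.
have card_vertices : #|{: bool * 'Z_s}| = 2 * s by rewrite card_prod card_bool card_Zs.
pose to_point := of_ord card_points.
have config := relabel_symmetric_configuration (to_ordK card_points)
  (of_ordK card_points) (cyclic_symmetric_configuration one_neq0 two_neq0).
have colouring := relabel_strong_colouring (to_ordK card_points)
  (of_ordK card_points) (class_strong_colouring (g := 1%R)).
exists (relabel_rel (of_ord card_vertices) (step_graph 1%R)),
  (relabel_blocks (to_ord card_points) (cyclic_blocks 1%R)), (@class _ \o to_point).
split=> //.
- apply: (relabel_cubic_bipartite (to_ordK card_vertices) (of_ordK card_vertices)).
  exact: step_graph_cubic_bipartite one_neq0 two_neq0.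
- apply: strong_chromatic_number_three => //; last by exists (@class _ \o to_point).
  by rewrite card_ord; lia.
- move=> i; apply: (relabel_iso_induced (to_ordK card_vertices) (of_ordK card_vertices)
    (to_ordK card_points) (of_ordK card_points) _ _ (induced_two_classes 1%R i)).
  + exact: (relabel_config_graph (to_ordK card_points) (of_ordK card_points)).
  + by move=> x; rewrite !inE.
Qed.
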